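(* Take $g_k(x)=|x|$ for all $k$, and assume (H1) and (H2) for $(X_1,\ldots,X_d)$ and for the aggregated vector below. Let $CR\subseteq\{1,\ldots,d\}$ be a set of $r\le d$ indices such that the risks $(X_k)_{k\in CR}$ are comonotonic. Let $(u_1,\ldots,u_d)=A_{X_1,\ldots,X_d}(u)$. Then the optimal allocation of $u$ for the vector consisting of the risks $X_i$, $i\in\{1,\ldots,d\}\setminus CR$, together with the single aggregated risk $\sum_{k\in CR}X_k$, is $A_{(X_i)_{i\notin CR},\,\sum_{k\in CR}X_k}(u)=\big((u_i)_{i\notin CR},\ \sum_{k\in CR}u_k\big)$.
   Context: For a vector $\mathbf Y=(Y_1,\ldots,Y_m)$ of nonnegative random variables and capital $u\ge0$, $\mathcal{U}^m_u=\{v\in[0,u]^m:\sum_k v_k=u\}$ and $I_{\mathbf Y}(v)=\sum_{k=1}^m\mathbb{E}[g_k(v_k-Y_k)\mathbf 1_{\{Y_k>v_k\}}\mathbf 1_{\{\sum_l Y_l\le u\}}]$; with $g_k(x)=|x|$ this is $\sum_k\mathbb{E}[(Y_k-v_k)^+\mathbf 1_{\{\sum_l Y_l\le u\}}]$. (H1): $I_{\mathbf Y}$ has a unique minimizer on $\mathcal{U}^m_u$, denoted $A_{Y_1,\ldots,Y_m}(u)$ (the optimal allocation). (H2): the $g_k$ are differentiable, the relevant $g_k'(v_k-Y_k)$ are integrable, and each pair $(Y_k,\sum_l Y_l)$ has a joint density. Random variables $(Z_1,\ldots,Z_n)$ are comonotonic if there exist a random variable $W$ and non-decreasing functions $\varphi_1,\ldots,\varphi_n$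 with $(Z_1,\ldots,Z_n)\overset{d}{=}(\varphi_1(W),\ldots,\varphi_n(W))$. *)

From HB Require Import structures.
From mathcomp Require Import all_boot all_order all_algebra.
From mathcomp Require Import all_classical all_reals all_analysis.
Set Implicit Arguments. Unset Strict Implicit. Unset Printing Implicit Defensive.
Import Order.TTheory GRing.Theory Num.Theory.
Import numFieldNormedType.Exports.
Local Open Scope classical_set_scope.
Local Open Scope ring_scope.

Section Alloc.
Context {R : realType} {dT : measure_display} {T : measurableType dT}
  (P : probability T R).

Definition simplexU (m : nat) (u : R) : set ('I_m -> R) :=
  [set v | (forall k, 0 <= v k <= u) /\ \sum_(k : 'I_m) v k = u].

Definition Ifun (m : nat) (g : 'I_m -> R -> R) (Y : 'I_m -> T -> R) (u : R)
  (v : 'I_m -> R) : \bar R :=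
  (\sum_(k : 'I_m) \int[P]_x
     (g k (v k - Y k x) * (if v k < Y k x then 1 else 0)
      * (if \sum_(l : 'I_m) Y l x <= u then 1 else 0))%:E)%E.

Definition is_min_alloc (m : nat) (g : 'I_m -> R -> R) (Y : 'I_m -> T -> R)
  (u : R) (v : 'I_m -> R) : Prop :=
  simplexU u v /\ forall w, simplexU u w -> (Ifun g Y u v <= Ifun g Y u w)%E.

Definition H1 (m : nat) (g : 'I_m -> R -> R) (Y : 'I_m -> T -> R) (u : R) : Prop :=
  exists v, is_min_alloc g Y u v /\ forall w, is_min_alloc g Y u w -> w = v.

Definition has_joint_density (Y S : T -> R) : Prop :=
  exists f : R * R -> R, measurable_fun setT f /\ (forall z, 0 <= f z) /\
    forall A : set (R * R), measurable A ->
      P ((fun x => (Y x, S x)) @^-1` A) =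
      (\int[(@lebesgue_measure R \x @lebesgue_measure R)%E]_(z in A) (f z)%:E)%E.

Definition H2abs (m : nat) (Y : 'I_m -> T -> R) : Prop :=
  forall k, has_joint_density (Y k) (fun x => \sum_(l : 'I_m) Y l x).

(* (Z_k)_{k in I} comonotonic: there are a random variable W (on some probability
   space) and nondecreasing phi_k with (Z_k)_{k in I} =d (phi_k(W))_{k in I};
   equality in distribution of random vectors = equality of joint CDFs. *)
Definition comonotonic (n : nat) (I : {set 'I_n}) (Z : 'I_n -> T -> R) : Prop :=
  exists (d' : measure_display) (T' : measurableType d') (P' : probability T' R)
    (W : T' -> R) (phi : 'I_n -> R -> R),
    measurable_fun setT W /\
    (forall k, k \in I -> {homo phi k : a b / a <= b}) /\
    forall t : 'I_n -> R,
      P [set x | forall k, k \in I -> Z k x <= t k] =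
      P' [set y | forall k, k \in I -> phi k (W y) <= t k].

End Alloc.

Definition gabs {R : realType} (m : nat) : 'I_m -> R -> R := fun _ x => `|x|.

(* the vector ((X_i)_{i notin CR}, sum_{k in CR} X_k), indexed by 'I_(#|~:CR|).+1,
   the non-CR indices listed in increasing order, the aggregate last *)
Definition aggr {A : Type} (addA : A -> A -> A) (zeroA : A) (d : nat)
  (CR : {set 'I_d}) (X : 'I_d -> A) : 'I_(#|~: CR|).+1 -> A :=
  fun i => match unlift ord_max i with
           | Some j => X (enum_val j)
           | None => \big[addA/zeroA]_(k in CR) X k
           end.
Arguments aggr {A} addA zeroA {d} CR X _.

(* Aggregating never hurts: pointwise, (sum_CR X_k - sum_CR v_k)^+ <= sum_CR (X_k - v_k)^+,
   so the aggregated allocation of any v costs at most I_X(v).  Conversely, writing the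
   comonotonic risks as X_k = phi_k(W), any capital s of the aggregate can be cut into
   v_k with sum v_k = s at the point where the nondecreasing sum of the phi_k crosses s,
   so that almost surely on {sum X <= u} either X_k <= v_k for all k in CR or
   X_k >= v_k for all k in CR; then the positive parts add up exactly and every
   aggregated allocation is matched by an original one of no larger cost.  Hence the
   aggregate of the optimal allocation is optimal, and unique by (H1).  As only the
   joint law of the X_k is known, the absence of crossings is transferred from phi(W)
   to X through equalities of orthant probabilities. *)

From HB Require Import structures.
From mathcomp Require Import all_boot all_order all_algebra.
From mathcomp Require Import all_classical all_reals all_analysis.
From mathcomp Require Import measurable_realfun lra.
Set Implicit Arguments. Unset Strict Implicit. Unset Printing Implicit Defensive.
Import Order.TTheory GRing.Theory Num.Theory.
Local Open Scope classical_set_scope.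
Local Open Scope ring_scope.

Section Excess.
Variable R : realDomainType.

Definition excess (a y : R) : R := Num.max (y - a) 0.

Definition one_sided (I : Type) (C : {pred I}) (v a : I -> R) : Prop :=
  (forall k, k \in C -> a k <= v k) \/ (forall k, k \in C -> v k <= a k).

Lemma excessE (a y : R) : `|a - y| * (if a < y then 1 else 0) = excess a y.
Proof.
rewrite /excess; case: ltP => ay.
  by rewrite mulr1 distrC ger0_norm ?subr_ge0 ?ltW // max_l // subr_ge0 ltW.
by rewrite mulr0 max_r // subr_le0.
Qed.

Lemma excess_ge0 (a y : R) : 0 <= excess a y.
Proof. by rewrite /excess le_max lexx orbT. Qed.

Lemma le_excess (a b y : R) : a <= b -> excess b y <= excess a y.
Proof. by move=> ab; rewrite /excess le_max2 // lerD2l lerN2. Qed.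

Lemma excess_sum_le (I : finType) (A : {pred I}) (a y : I -> R) :
  excess (\sum_(k in A) a k) (\sum_(k in A) y k) <= \sum_(k in A) excess (a k) (y k).
Proof.
rewrite /excess ge_max -sumrB; apply/andP; split.
  by apply: ler_sum => k _; rewrite le_max lexx.
by apply: sumr_ge0 => k _; apply: excess_ge0.
Qed.

Lemma sum_excess_one_sided (I : finType) (A : {pred I}) (a y : I -> R) :
  one_sided A a y ->
  \sum_(k in A) excess (a k) (y k) = excess (\sum_(k in A) a k) (\sum_(k in A) y k).
Proof.
case=> cmp; rewrite /excess.
  rewrite big1 => [|k kA]; last by rewrite max_r // subr_le0 cmp.
  by rewrite max_r // subr_le0; apply: ler_sum.
rewrite max_l; last by rewrite subr_ge0; apply: ler_sum.
by rewrite -sumrB; apply: eq_bigr => k kA; rewrite max_l // subr_ge0 cmp.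
Qed.

End Excess.

Section OneSidedSplit.
Variable R : realType.

Lemma sup_image_itv (S : Type) (A : set S) (g : S -> R) (u : R) :
  0 <= u -> (forall w, 0 <= g w <= u) ->
  0 <= sup (g @` A) <= u /\ forall w, A w -> g w <= sup (g @` A).
Proof.
move=> u0 gb; have [->|/set0P[a Aa]] := eqVneq A set0.
  by rewrite image_set0 sup0 lexx u0.
have ubg : ubound (g @` A) u by move=> _ [w _ <-]; case/andP: (gb w).
have ub w : A w -> g w <= sup (g @` A).
  by move=> Aw; apply: sup_upper_bound; [split; [exists (g a), a | exists u] | exists w].
split=> //; apply/andP; split; last by apply: ge_sup => //; exists (g a), a.
by apply: le_trans (ub a Aa); case/andP: (gb a).
Qed.

Lemma directed_sup_approx (S : Type) (I : eqType) (g : I -> S -> R) (A : set S)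
    (u eps : R) (s : seq I) :
  0 < eps -> (forall k w, g k w <= u) -> A !=set0 ->
  (forall w1 w2, A w1 -> A w2 -> exists2 w3, A w3 &
     forall k, k \in s -> g k w1 <= g k w3 /\ g k w2 <= g k w3) ->
  exists2 w, A w & forall k, k \in s -> sup (g k @` A) - eps <= g k w.
Proof.
move=> eps0 gu [a0 Aa0]; elim: s => [|k s IH] dir; first by exists a0.
have [|w Aw hw] := IH.
  move=> w1 w2 A1 A2; have [w3 A3 h3] := dir w1 w2 A1 A2.
  by exists w3 => // k' k's; apply: h3; rewrite inE k's orbT.
have hs : has_sup (g k @` A) by split; [exists (g k a0), a0 | exists u => _ [? _ <-]].
have [_ [w1 Aw1 <-] hw1] := sup_adherent eps0 hs.
have [w3 Aw3 h3] := dir w w1 Aw Aw1.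
exists w3 => // k'; rewrite inE => /orP[/eqP->|k's].
  by apply: le_trans (ltW hw1) _; case: (h3 k (mem_head _ _)).
by apply: le_trans (hw k' k's) _; case: (h3 k'); rewrite // inE k's orbT.
Qed.

(* [sup] of an empty set is [0] in this library, hence the hypothesis [0 <= c]. *)
Lemma sum_sup_directed_le (S : Type) (I : finType) (C : {pred I})
    (g : I -> S -> R) (A : set S) (u c : R) :
  (forall k w, 0 <= g k w <= u) -> 0 <= c ->
  (forall w1 w2, A w1 -> A w2 -> exists2 w3, A w3 &
     forall k, k \in C -> g k w1 <= g k w3 /\ g k w2 <= g k w3) ->
  (forall w, A w -> \sum_(k in C) g k w <= c) ->
  \sum_(k in C) sup (g k @` A) <= c.
Proof.
move=> gb c0 dir hc; have [->|/set0P A0] := eqVneq A set0.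
  by rewrite big1 // => k _; rewrite image_set0 sup0.
have gu k w : g k w <= u by case/andP: (gb k w).
apply/ler_addgt0Pr => e e0; set n := #|C|.
pose eps := e / n.+1%:R.
have eps0 : 0 < eps by rewrite divr_gt0.
have neps : eps *+ n + eps = e.
  by rewrite -mulrSr -[eps *+ _]mulr_natr divfK.
have [|w Aw hw] := @directed_sup_approx S I g A u eps (enum C) eps0 gu A0.
  move=> w1 w2 A1 A2; have [w3 ? h3] := dir w1 w2 A1 A2.
  by exists w3 => // k; rewrite mem_enum; apply: h3.
have : \sum_(k in C) (sup (g k @` A) - eps) <= c.
  by apply: le_trans (hc w Aw); apply: ler_sum => k kC; apply: hw; rewrite mem_enum.
rewrite sumrB sumr_const -/n; lra.
Qed.

Lemma sum_interpolate (I : finType) (C : {pred I}) (lo hi : I -> R) (s : R) :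
  (forall k, k \in C -> lo k <= hi k) ->
  \sum_(k in C) lo k <= s <= \sum_(k in C) hi k ->
  exists2 v : I -> R, (forall k, k \in C -> lo k <= v k <= hi k) &
    \sum_(k in C) v k = s.
Proof.
move=> lohi /andP[Ls sH]; set SL := \sum_(k in C) lo k in Ls *.
set SH := \sum_(k in C) hi k in sH *.
pose t := (s - SL) / (SH - SL).
have t01 : 0 <= t <= 1.
  have [e|ne] := eqVneq (SH - SL) 0; first by rewrite /t e invr0 mulr0 lexx ler01.
  have p : 0 < SH - SL by rewrite lt_def ne subr_ge0 (le_trans Ls sH).
  rewrite /t divr_ge0 ?subr_ge0 ?(ltW p) ?(le_trans Ls sH) //=.
  by rewrite ler_pdivrMr // mul1r lerD2r.
exists (fun k => lo k + t * (hi k - lo k)).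
  move=> k kC; have := lohi k kC; rewrite -subr_ge0; case/andP: t01 => t0 t1 h.
  by rewrite lerDl mulr_ge0 //= -lerBrDl ler_piMl.
rewrite big_split /= -mulr_sumr sumrB -/SL -/SH /t.
have [e|ne] := eqVneq (SH - SL) 0; last by rewrite divfK // addrC subrK.
by rewrite e invr0 !mulr0 addr0; apply/eqP; rewrite eq_le Ls /=; move/eqP: e; lra.
Qed.

Lemma ge0_ge_sup (E : set R) (M : R) : 0 <= M -> ubound E M -> sup E <= M.
Proof.
by move=> M0 EM; have [->|/set0P E0] := eqVneq E set0; [rewrite sup0 | exact: ge_sup].
Qed.

Section Cut.
Variables (I : finType) (C : {pred I}) (delta : I -> R -> R) (u s : R).
Hypotheses (delta_homo : forall k, k \in C -> {homo delta k : a b / a <= b})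
  (delta_itv : forall k x, 0 <= delta k x <= u) (u0 : 0 <= u).

Let A := [set w | \sum_(k in C) delta k w <= s].

Let A_below a b : A a -> ~ A b -> a <= b.
Proof.
move=> Aa Bb; rewrite leNgt; apply/negP => ba; apply: Bb; apply: le_trans Aa.
by apply: ler_sum => k kC; apply: delta_homo => //; exact: ltW.
Qed.

Let delta_itvN k w : 0 <= u - delta k w <= u.
Proof. by case/andP: (delta_itv k w) => ? ?; apply/andP; split; lra. Qed.

(* The sups of the [delta_k] below the cut and their infs above it; the inf is
   written [u - sup (u - delta_k)] so that it defaults to [u] when the set is empty. *)
Let lo k := sup (delta k @` A).
Let hi k := u - sup ((fun w => u - delta k w) @` ~` A).

Let lo_spec k : 0 <= lo k <= u /\ forall w, A w -> delta k w <= lo k.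
Proof. exact: sup_image_itv. Qed.

Let hi_spec k : 0 <= hi k <= u /\ forall w, ~ A w -> hi k <= delta k w.
Proof.
have [hb hB] := sup_image_itv (~` A) u0 (delta_itvN k).
split; first by move: hb; rewrite /hi; lra.
by move=> w Bw; have /= := hB w Bw; rewrite /hi; lra.
Qed.

Let lo_le_hi k : k \in C -> lo k <= hi k.
Proof.
move=> kC; suff : sup ((fun w => u - delta k w) @` ~` A) <= u - lo k by rewrite /hi; lra.
apply: ge0_ge_sup => [|_ [w Bw <-]]; first by case: (lo_spec k) => /andP[_ ?] _; lra.
suff : lo k <= delta k w by lra.
apply: ge0_ge_sup => [|_ [a Aa <-]]; first by case/andP: (delta_itv k w).
by apply: delta_homo => //; exact: A_below.
Qed.

Let sum_lo_le : 0 <= s -> \sum_(k in C) lo k <= s.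
Proof.
move=> s0; apply: (sum_sup_directed_le delta_itv s0) => // w1 w2 A1 A2.
exists (Order.max w1 w2); first by rewrite /Order.max; case: ifP.
by move=> k kC; rewrite !delta_homo // ?le_max lexx ?orbT.
Qed.

Let sum_hi_ge : (0 < #|C|)%N -> s <= u -> s <= \sum_(k in C) hi k.
Proof.
move=> C0 su; have Cu : s <= u *+ #|C|.
  by rewrite -(prednK C0) mulrS ler_wpDr ?mulrn_wge0.
suff : \sum_(k in C) sup ((fun w => u - delta k w) @` ~` A) <= u *+ #|C| - s.
  by rewrite /hi sumrB sumr_const; lra.
apply: (sum_sup_directed_le delta_itvN) => [|w1 w2 B1 B2|w Bw]; first by lra.
  exists (Order.min w1 w2); first by rewrite /Order.min; case: ifP.
  by move=> k kC; rewrite !lerD2l !lerN2 !delta_homo // ?ge_min lexx ?orbT.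
rewrite sumrB sumr_const; move/negP: Bw; rewrite -ltNge; lra.
Qed.

Lemma one_sided_split : (0 < #|C|)%N -> 0 <= s <= u ->
  exists2 v : I -> R, (forall k, k \in C -> 0 <= v k <= u) /\ \sum_(k in C) v k = s &
    forall w, one_sided C v (delta^~ w).
Proof.
move=> C0 /andP[s0 su].
have lo_s_hi : \sum_(k in C) lo k <= s <= \sum_(k in C) hi k.
  by rewrite sum_lo_le // sum_hi_ge.
have [v lvh sv] := sum_interpolate lo_le_hi lo_s_hi.
exists v.
  split=> // k kC; have := lvh k kC.
  by case: (lo_spec k) => /andP[? ?] _; case: (hi_spec k) => /andP[? ?] _; lra.
move=> w; have [Aw|Bw] := pselect (A w); [left|right] => k kC; have := lvh k kC.
  by case: (lo_spec k) => _ /(_ w Aw); lra.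
by case: (hi_spec k) => _ /(_ w Bw); lra.
Qed.

End Cut.

End OneSidedSplit.

Section Clamp.
Variable R : realDomainType.

Definition clamp (u x : R) : R := Num.min (Num.max x 0) u.

Lemma clamp_homo (u : R) : {homo clamp u : a b / a <= b}.
Proof. by move=> a b ab; rewrite /clamp le_min !ge_min le_max2 ?lexx ?orbT. Qed.

Lemma clamp_itv (u x : R) : 0 <= u -> 0 <= clamp u x <= u.
Proof. by move=> u0; rewrite /clamp le_min ge_min le_max !lexx u0 !orbT. Qed.

Lemma clamp_id (u x : R) : 0 <= x <= u -> clamp u x = x.
Proof. by case/andP=> x0 xu; rewrite /clamp (max_l x0) (min_l xu). Qed.

Lemma le_clamp (u x : R) : x <= u -> x <= clamp u x.
Proof. by move=> xu; rewrite /clamp le_min le_max lexx xu. Qed.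

End Clamp.

Lemma negligible_bigcup_count (dT : measure_display) (T : measurableType dT)
    (R : realType) (mu : {measure set T -> \bar R}) (I : countType) (F : I -> set T) :
  (forall i, mu.-negligible (F i)) -> mu.-negligible (\bigcup_i F i).
Proof.
move=> nF; pose G n := if @unpickle I n is Some i then F i else set0.
have nG n : mu.-negligible (G n).
  by rewrite /G; case: unpickle => [i|]; [exact: nF | exact: negligible_set0].
apply: negligibleS (negligible_bigcup nG) => x [i _ Fx].
by exists (pickle i) => //; rewrite /G pickleK.
Qed.

Section Orthants.
Context (R : realType) (dT : measure_display) (T : measurableType dT)
  (P : probability T R) (d : nat) (X : 'I_d -> T -> R) (CR : {set 'I_d}).
Hypothesis mX : forall k, measurable_fun setT (X k).

Definition orthant (S : Type) (Z : 'I_d -> S -> R) (t : 'I_d -> R) : set S :=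
  [set x | forall k, k \in CR -> Z k x <= t k].

Lemma measurable_orthant t : measurable (orthant X t).
Proof.
have -> : orthant X t = \bigcap_(k in [set k | k \in CR]) [set x | X k x <= t k].
  by apply/seteqP; split=> x /= h k; apply: h.
apply: fin_bigcap_measurable; first exact: finite_finset.
move=> k _; rewrite -preimage_itvNyc -[_ @^-1` _]setTI.
by apply: mX => //; exact: measurable_itv.
Qed.

Variables (S : Type) (Z : 'I_d -> S -> R) (mu : set S -> \bar R).
Hypothesis orthantE : forall t, P (orthant X t) = mu (orthant Z t).

Lemma orthant_setD_negligible t t' :
  orthant X t' `<=` orthant X t -> orthant Z t = orthant Z t' ->
  P.-negligible (orthant X t `\` orthant X t').
Proof.
move=> sub eqZ; apply/negligibleP; first by apply: measurableD; exact: measurable_orthant.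
have PE : P (orthant X t) = P (orthant X t') by rewrite !orthantE eqZ.
have finP t'' : P (orthant X t'') \is a fin_num.
  by apply: fin_num_measure; exact: measurable_orthant.
rewrite measureD ?ltey_eq ?finP //; try exact: measurable_orthant.
rewrite (setIidr sub); change (P (orthant X t) - P (orthant X t') = 0)%E.
by rewrite PE subee.
Qed.

Variable u : R.
Hypothesis X0 : forall k x, 0 <= X k x.
Variable v : 'I_d -> R.
Hypothesis v_itv : forall k, k \in CR -> 0 <= v k <= u.
Hypothesis Z_one_sided : forall y, one_sided CR v (fun k => clamp u (Z k y)).

Let below j e k := if k == j then v j - e else u.
Let below_cross i j e k := if k == i then v i else below j e k.

(* The event of a crossing (X_j <= v_j - e while X_i > v_i) is an orthant difference
   whose two orthants coincide for [Z], which never crosses [v]. *)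
Lemma orthant_cross_negligible i j e : i \in CR -> j \in CR -> i != j -> 0 < e ->
  P.-negligible (orthant X (below j e) `\` orthant X (below_cross i j e)).
Proof.
move=> iC jC ij e0; have /andP[vj0 vju] := v_itv jC.
have [neg|nonneg] := ltP (v j - e) 0.
  apply: negligibleS (negligible_set0 P) => x [/(_ j jC)].
  by rewrite /below eqxx => h _; have := X0 j x; lra.
have sub S' (Z' : 'I_d -> S' -> R) :
    orthant Z' (below_cross i j e) `<=` orthant Z' (below j e).
  move=> x h k kC; have := h k kC; rewrite /below_cross; case: eqP => [->|_] //.
  by rewrite /below (negbTE ij) => /le_trans; apply; case/andP: (v_itv iC).
apply: orthant_setD_negligible; first exact: sub.
apply/seteqP; split; last exact: sub.
move=> y h k kC; rewrite /below_cross; case: eqP => [->|_]; last exact: h.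
have hi := h i iC; rewrite /below (negbTE ij) in hi.
have hj := h j jC; rewrite /below eqxx in hj.
case: (Z_one_sided y) => [/(_ i iC)|/(_ j jC) vj]; first exact/le_trans/le_clamp.
have : clamp u (Z j y) <= v j - e.
  by rewrite -[leRHS](@clamp_id _ u) ?clamp_homo //; apply/andP; split; lra.
lra.
Qed.

Lemma not_one_sided_negligible :
  P.-negligible [set x | (forall k, k \in CR -> X k x <= u) /\
                         ~ one_sided CR v (fun k => X k x)].
Proof.
pose F (p : 'I_d * 'I_d * nat) := let: (i, j, n) := p in
  if [&& i \in CR, j \in CR & i != j]
  then orthant X (below j n.+1%:R^-1) `\` orthant X (below_cross i j n.+1%:R^-1)
  else set0.
apply: (@negligibleS _ _ _ _ (\bigcup_p F p)).
  move=> x [box not1].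
  have [i iC vi] : exists2 i, i \in CR & v i < X i x.
    have [//|ni] := pselect (exists2 i, i \in CR & v i < X i x); exfalso.
    by apply: not1; left=> k kC; rewrite leNgt; apply/negP => h; apply: ni; exists k.
  have [j jC vj] : exists2 j, j \in CR & X j x < v j.
    have [//|nj] := pselect (exists2 j, j \in CR & X j x < v j); exfalso.
    by apply: not1; right=> k kC; rewrite leNgt; apply/negP => h; apply: nj; exists k.
  have ij : i != j by apply/eqP => eij; move: vi; rewrite eij; lra.
  pose n := Num.truncn (v j - X j x)^-1.
  have hn : n.+1%:R^-1 < v j - X j x.
    by rewrite -[ltRHS]invrK ltf_pV2 ?posrE ?invr_gt0 ?subr_gt0 ?ltr0n ?truncnS_gt.
  exists (i, j, n) => //; rewrite /F iC jC ij /=; move: hn; set e := n.+1%:R^-1 => hn.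
  split=> [k kC|/(_ i iC)]; rewrite /below_cross /below ?eqxx; last lra.
  by case: eqP => [->|_]; [lra | exact: box].
apply: negligible_bigcup_count => -[[i j] n]; rewrite /F.
case: ifP => [/and3P[iC jC ij]|_]; last exact: negligible_set0.
by apply: orthant_cross_negligible; rewrite // invr_gt0 ltr0n.
Qed.

End Orthants.

Lemma big_ord_recr_lift (V : Type) (idx : V) (op : Monoid.law idx) (n : nat)
    (F : 'I_n.+1 -> V) :
  \big[op/idx]_(i < n.+1) F i = op (\big[op/idx]_(j < n) F (lift ord_max j)) (F ord_max).
Proof.
rewrite big_ord_recr; apply: congr2 => //; apply: eq_bigr => j _.
by congr F; apply: val_inj; rewrite /= /bump leqNgt ltn_ord.
Qed.

Lemma big_card0 (V : Type) (idx : V) (op : V -> V -> V) (I : finType) (A : {pred I})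
    (F : I -> V) :
  #|A| = 0%N -> \big[op/idx]_(k in A) F k = idx.
Proof. by move=> A0; apply: big_pred0 => k; rewrite (card0_eq A0). Qed.

Lemma big_enum_setC (V : Type) (idx : V) (op : Monoid.com_law idx) (I : finType)
    (C : {set I}) (F : I -> V) :
  \big[op/idx]_(k : I) F k =
  op (\big[op/idx]_(j < #|~: C|) F (enum_val j)) (\big[op/idx]_(k in C) F k).
Proof.
rewrite -big_enum_val (bigID (mem C)) Monoid.mulmC /=.
by apply: congr2 => //; apply: eq_bigl => k; rewrite !inE.
Qed.

Section Aggregation.
Variables (V : Type) (addV : V -> V -> V) (zeroV : V) (d : nat) (CR : {set 'I_d}).

Lemma aggr_lift (Xf : 'I_d -> V) (j : 'I_#|~: CR|) :
  aggr addV zeroV CR Xf (lift ord_max j) = Xf (enum_val j).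
Proof. by rewrite /aggr liftK. Qed.

Lemma aggr_max (Xf : 'I_d -> V) :
  aggr addV zeroV CR Xf ord_max = \big[addV/zeroV]_(k in CR) Xf k.
Proof. by rewrite /aggr unlift_none. Qed.

End Aggregation.

(* Its values on [CR] are junk. *)
Definition deaggr (R : Type) (d : nat) (CR : {set 'I_d}) (w : 'I_#|~: CR|.+1 -> R)
    (k : 'I_d) : R :=
  w (inord (index k (enum (~: CR)))).

Lemma deaggr_enum (R : Type) (d : nat) (CR : {set 'I_d}) (w : 'I_#|~: CR|.+1 -> R)
    (j : 'I_#|~: CR|) :
  deaggr w (enum_val j) = w (lift ord_max j).
Proof.
rewrite /deaggr (enum_val_nth (enum_val j)) index_uniq ?enum_uniq -?cardE //.
congr w; apply: val_inj; rewrite /= inordK; last exact: leq_trans (ltn_ord j) _.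
by rewrite /bump leqNgt ltn_ord.
Qed.

Lemma measurable_sum_in (dT : measure_display) (T : measurableType dT) (R : realType)
    (I : finType) (A : {pred I}) (f : I -> T -> R) :
  (forall k, measurable_fun setT (f k)) ->
  measurable_fun setT (fun x => \sum_(k in A) f k x).
Proof.
move=> mf; under eq_fun do rewrite -big_enum.
exact: measurable_sum.
Qed.

Section Cost.
Context (R : realType) (dT : measure_display) (T : measurableType dT)
  (P : probability T R) (d : nat) (X : 'I_d -> T -> R) (u : R).
Hypothesis mX : forall k, measurable_fun setT (X k).

Let covered x : R := if \sum_(l < d) X l x <= u then 1 else 0.

Definition cost (a : R) (Z : T -> R) : \bar R :=
  \int[P]_x (excess a (Z x) * covered x)%:E.

Let covered_ge0 x : 0 <= covered x.
Proof. by rewrite /covered; case: ifP. Qed.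

Let cost_integrand_ge0 a (Z : T -> R) x : (0 <= (excess a (Z x) * covered x)%:E)%E.
Proof. by rewrite lee_fin mulr_ge0 ?excess_ge0. Qed.

Lemma measurable_cost_integrand a (Z : T -> R) : measurable_fun setT Z ->
  measurable_fun setT (fun x => (excess a (Z x) * covered x)%:E).
Proof.
move=> mZ; apply/measurable_EFinP; apply: measurable_funM.
  by apply: measurable_maxr => //; apply: measurable_funB.
apply: measurable_fun_ifT => //; apply: measurable_fun_ler => //.
exact: measurable_sum_in.
Qed.

Lemma cost_ge0 a Z : (0 <= cost a Z)%E.
Proof. exact: integral_ge0. Qed.

Lemma le_cost a b Z : measurable_fun setT Z -> a <= b -> (cost b Z <= cost a Z)%E.
Proof.
move=> mZ ab; apply: ge0_le_integral => //; try exact: measurable_cost_integrand.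
by move=> x _; rewrite lee_fin ler_wpM2r ?le_excess.
Qed.

Lemma sum_cost (I : finType) (A : {pred I}) (a : I -> R) (Z : I -> T -> R) :
  (forall k, measurable_fun setT (Z k)) ->
  (\sum_(k in A) cost (a k) (Z k) =
   \int[P]_x ((\sum_(k in A) excess (a k) (Z k x)) * covered x)%:E)%E.
Proof.
move=> mZ; rewrite -big_enum /cost -ge0_integral_sum //; last first.
  by move=> k; apply: measurable_cost_integrand.
by apply: eq_integral => x _; rewrite sumEFin big_enum mulr_suml.
Qed.

Let measurable_sum_cost_integrand (I : finType) (A : {pred I}) (a : I -> R)
    (Z : I -> T -> R) : (forall k, measurable_fun setT (Z k)) ->
  measurable_fun setT (fun x => ((\sum_(k in A) excess (a k) (Z k x)) * covered x)%:E).
Proof.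
move=> mZ; apply/measurable_EFinP; under eq_fun do rewrite mulr_suml.
by apply: measurable_sum_in => k; apply/measurable_EFinP; exact: measurable_cost_integrand.
Qed.

Lemma cost_sum_le (I : finType) (A : {pred I}) (a : I -> R) (Z : I -> T -> R) :
  (forall k, measurable_fun setT (Z k)) ->
  (cost (\sum_(k in A) a k)%R (fun x => \sum_(k in A) Z k x)%R <=
   \sum_(k in A) cost (a k) (Z k))%E.
Proof.
move=> mZ; rewrite sum_cost //; apply: ge0_le_integral => //.
- by move=> x _; rewrite lee_fin mulr_ge0 ?excess_ge0.
- apply: (@measurable_cost_integrand _ (fun x => \sum_(k in A) Z k x)).
  exact: measurable_sum_in.
- exact: measurable_sum_cost_integrand.
- by move=> x _; rewrite lee_fin ler_wpM2r ?excess_sum_le.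
Qed.

Lemma cost_one_sided_le (C : {set 'I_d}) (v : 'I_d -> R) :
  (forall k x, 0 <= X k x) ->
  P.-negligible [set x | (forall k, k \in C -> X k x <= u) /\
                         ~ one_sided C v (fun k => X k x)] ->
  (\sum_(k in C) cost (v k) (X k) <=
   cost (\sum_(k in C) v k)%R (fun x => \sum_(k in C) X k x)%R)%E.
Proof.
move=> X0 N; rewrite sum_cost //; apply: ae_ge0_le_integral => //.
- by move=> x _; rewrite lee_fin mulr_ge0 //; apply: sumr_ge0 => k _; exact: excess_ge0.
- exact: measurable_sum_cost_integrand.
- by move=> x _; rewrite lee_fin mulr_ge0 ?excess_ge0.
- apply: (@measurable_cost_integrand _ (fun x => \sum_(k in C) X k x)).
  exact: measurable_sum_in.
apply: negligibleS N => x /= le12.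
have [cov|ncov] := boolP (\sum_(l < d) X l x <= u); last first.
  by exfalso; apply: le12 => _; rewrite /covered (negbTE ncov) !mulr0.
split=> [k _|os]; last by apply: le12 => _; rewrite sum_excess_one_sided.
apply: le_trans cov; rewrite (bigD1 k) //= lerDl.
by apply: sumr_ge0 => l _; exact: X0.
Qed.

Lemma Ifun_gabs (m : nat) (Y : 'I_m -> T -> R) (v : 'I_m -> R) :
  (forall x, \sum_(l < m) Y l x = \sum_(l < d) X l x) ->
  Ifun P (@gabs R m) Y u v = (\sum_(k < m) cost (v k) (Y k))%E.
Proof.
move=> sumY; apply: eq_bigr => k _; apply: eq_integral => x _.
by rewrite /gabs excessE sumY.
Qed.

End Cost.

Section Allocation.
Context (R : realType) (dT : measure_display) (T : measurableType dT)
  (P : probability T R) (d : nat) (X : 'I_d -> T -> R) (u : R) (CR : {set 'I_d}).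
Hypotheses (mX : forall k, measurable_fun setT (X k)) (X0 : forall k x, 0 <= X k x)
  (u0 : 0 <= u).

Let Y := aggr (fun f g x => f x + g x) (fun _ => 0) CR X.
Let ZC x := \sum_(k in CR) X k x.
Let cost := cost P X u.

Let Y_max : Y ord_max = ZC.
Proof.
rewrite /Y aggr_max; apply/funext => x.
by rewrite (big_morph (fun f : T -> R => f x) (id1 := 0) (op1 := +%R)).
Qed.

Let sum_Y x : \sum_(l < #|~: CR|.+1) Y l x = \sum_(l < d) X l x.
Proof.
rewrite big_ord_recr_lift Y_max (big_enum_setC _ CR).
by congr (_ + _); apply: eq_bigr => j _; rewrite /Y aggr_lift.
Qed.

Lemma Ifun_split v : Ifun P (@gabs R d) X u v =
  (\sum_(j < #|~: CR|) cost (v (enum_val j)) (X (enum_val j)) +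
   \sum_(k in CR) cost (v k) (X k))%E.
Proof. by rewrite (@Ifun_gabs _ _ _ P d X u) // (big_enum_setC _ CR). Qed.

Lemma Ifun_aggr w : Ifun P (@gabs R _) Y u w =
  (\sum_(j < #|~: CR|) cost (w (lift ord_max j)) (X (enum_val j)) +
   cost (w ord_max) ZC)%E.
Proof.
rewrite (@Ifun_gabs _ _ _ P d X u) // big_ord_recr_lift Y_max.
by congr (_ + _)%E; apply: eq_bigr => j _; rewrite /Y aggr_lift.
Qed.

Lemma Ifun_aggr_le (v : 'I_d -> R) :
  (Ifun P (@gabs R _) Y u (aggr +%R 0%R CR v) <= Ifun P (@gabs R d) X u v)%E.
Proof.
rewrite Ifun_aggr Ifun_split aggr_max.
rewrite (eq_bigr (fun j => cost (v (enum_val j)) (X (enum_val j)))) => [|j _]; last first.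
  by rewrite aggr_lift.
exact/leeD2l/cost_sum_le.
Qed.

Lemma simplex_aggr v : simplexU u v -> simplexU u (aggr +%R 0 CR v).
Proof.
move=> [vb vs]; split; last first.
  rewrite big_ord_recr_lift aggr_max -vs (big_enum_setC _ CR).
  by congr (_ + _); apply: eq_bigr => j _; rewrite aggr_lift.
move=> i; case: (unliftP ord_max i) => [j ->|->]; first by rewrite aggr_lift.
rewrite aggr_max; apply/andP; split; first by apply: sumr_ge0 => k _; case/andP: (vb k).
rewrite -vs (big_enum_setC _ CR) lerDr.
by apply: sumr_ge0 => j _; case/andP: (vb (enum_val j)).
Qed.

(* The phi_k are clamped to [0, u] to get bounded cut functions; this is harmless
   since only outcomes with all X_k in [0, u] matter. *)
Lemma comonotone_split_cost s : 0 <= s <= u -> (0 < #|CR|)%N -> comonotonic P CR X ->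
  exists2 vC : 'I_d -> R,
    (forall k, k \in CR -> 0 <= vC k <= u) /\ \sum_(k in CR) vC k = s &
    (\sum_(k in CR) cost (vC k) (X k) <= cost s ZC)%E.
Proof.
move=> s_itv CR0 [d' [T' [P' [W [phi [_ [hom orthantE]]]]]]].
have [v [v_itv vs] v_one_sided] :=
  one_sided_split (delta := fun k y => clamp u (phi k y))
    (fun k kC a b ab => clamp_homo u (hom k kC a b ab)) (fun k y => clamp_itv (phi k y) u0)
    u0 CR0 s_itv.
exists v => //; rewrite -vs; apply: cost_one_sided_le => //.
apply: (@not_one_sided_negligible _ _ _ P d X CR mX T' (fun k y => phi k (W y)) P') => //.
Qed.

Lemma deaggr_alloc w vC : simplexU u w ->
  (forall k, k \in CR -> 0 <= vC k <= u) -> \sum_(k in CR) vC k = w ord_max ->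
  (\sum_(k in CR) cost (vC k) (X k) <= cost (w ord_max) ZC)%E ->
  exists2 v, simplexU u v & (Ifun P (@gabs R d) X u v <= Ifun P (@gabs R _) Y u w)%E.
Proof.
move=> [wb ws] vC_itv vCs le_CR.
pose v k := if k \in CR then vC k else deaggr w k.
have v_enum j : v (enum_val j) = w (lift ord_max j).
  by have := enum_valP j; rewrite inE /v => /negbTE ->; exact: deaggr_enum.
have v_CR k : k \in CR -> v k = vC k by rewrite /v => ->.
exists v.
  split=> [k|]; first by rewrite /v; case: ifPn => [/vC_itv|_] //; exact: wb.
  rewrite (big_enum_setC _ CR) (eq_bigr _ (fun j _ => v_enum j)) (eq_bigr _ v_CR).
  by rewrite vCs -ws big_ord_recr_lift.
rewrite Ifun_split Ifun_aggr (eq_bigr _ (fun j _ => congr1 (cost^~ _) (v_enum j))).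
by rewrite (eq_bigr _ (fun k kC => congr1 (cost^~ (X k)) (v_CR k kC))); apply: leeD2l.
Qed.

(* Without comonotonic risks the aggregated risk is [0], and its capital is best
   moved to any other risk. *)
Lemma deaggr_shift w : #|CR| = 0%N -> (0 < #|~: CR|)%N -> simplexU u w ->
  exists2 v, simplexU u v & (Ifun P (@gabs R d) X u v <= Ifun P (@gabs R _) Y u w)%E.
Proof.
move=> CR0 C'0 [wb ws]; pose j0 : 'I_#|~: CR| := Ordinal C'0.
pose v k := deaggr w k + (if k == enum_val j0 then w ord_max else 0).
have v_enum j : v (enum_val j) = w (lift ord_max j) + (if j == j0 then w ord_max else 0).
  by rewrite /v deaggr_enum (inj_eq enum_val_inj).
have w_ge0 i : 0 <= w i by case/andP: (wb i).
exists v.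
  split=> [k|].
    rewrite /v; case: eqP => [->|_]; last by rewrite addr0; exact: wb.
    rewrite deaggr_enum addr_ge0 //= -ws big_ord_recr_lift lerD2r (bigD1 j0) //= lerDl.
    exact: sumr_ge0.
  rewrite (big_enum_setC _ CR) (big_card0 _ _ _ CR0) Monoid.mulm1.
  rewrite (eq_bigr _ (fun j _ => v_enum j)).
  by rewrite big_split /= -big_mkcond big_pred1_eq -big_ord_recr_lift.
rewrite Ifun_split Ifun_aggr (big_card0 _ _ _ CR0) adde0 -[leLHS]adde0.
apply: leeD; last exact: cost_ge0.
apply: lee_sum => j _; rewrite v_enum; apply: le_cost => //.
by rewrite lerDl; case: eqP.
Qed.

Lemma disaggregate w : simplexU u w -> (exists v : 'I_d -> R, simplexU u v) ->
  comonotonic P CR X ->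
  exists2 v, simplexU u v & (Ifun P (@gabs R d) X u v <= Ifun P (@gabs R _) Y u w)%E.
Proof.
move=> wsim [v0 v0sim] como; have [wb _] := wsim.
have [CR0|CR_gt0] := posnP #|CR|; last first.
  have [vC [vC_itv vCs] le_CR] := comonotone_split_cost (wb ord_max) CR_gt0 como.
  exact: deaggr_alloc wsim vC_itv vCs le_CR.
have [C'0|] := posnP #|~: CR|; last by move=> C'_gt0; exact: deaggr_shift.
exists v0 => //; rewrite Ifun_split (big_card0 _ _ _ CR0) adde0 big1 => [|j]; last first.
  by move: (leq_trans (ltn_ord j) (eq_leq C'0)).
rewrite Ifun_aggr; apply: adde_ge0; last exact: cost_ge0.
by apply: sume_ge0 => j _; exact: cost_ge0.
Qed.

End Allocation.

Theorem mainTheorem5 (R : realType) (dT : measure_display) (T : measurableType dT)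
  (P : probability T R) (d : nat) (X : 'I_d -> T -> R) (u : R)
  (CR : {set 'I_d}) (uvec : 'I_d -> R) :
  0 <= u ->
  (forall k, measurable_fun setT (X k)) ->
  (forall k x, 0 <= X k x) ->
  (* (H1), (H2) for (X_1, ..., X_d) *)
  H1 P (@gabs R d) X u -> H2abs P X ->
  (* (H1), (H2) for the aggregated vector *)
  H1 P (@gabs R _) (aggr (fun f g x => f x + g x) (fun _ => 0) CR X) u ->
  H2abs P (aggr (fun f g x => f x + g x) (fun _ => 0) CR X) ->
  comonotonic P CR X ->
  (* (u_1, ..., u_d) = A_{X_1,...,X_d}(u) *)
  is_min_alloc P (@gabs R d) X u uvec ->
  is_min_alloc P (@gabs R _) (aggr (fun f g x => f x + g x) (fun _ => 0) CR X) u
    (aggr +%R 0 CR uvec) /\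
  forall w, is_min_alloc P (@gabs R _)
              (aggr (fun f g x => f x + g x) (fun _ => 0) CR X) u w ->
            w = aggr +%R 0 CR uvec.
Proof.
move=> u0 mX X0 _ _ [v0 [_ v0_uniq]] _ como [usim umin].
have uvec_aggr_min : is_min_alloc P (@gabs R _)
    (aggr (fun f g x => f x + g x) (fun _ => 0) CR X) u (aggr +%R 0 CR uvec).
  split=> [|w wsim]; first exact: simplex_aggr.
  have [v vsim le_vw] := disaggregate mX X0 u0 wsim (ex_intro _ uvec usim) como.
  exact: le_trans (Ifun_aggr_le P u CR mX uvec) (le_trans (umin v vsim) le_vw).
by split=> // w wmin; rewrite (v0_uniq w wmin) (v0_uniq _ uvec_aggr_min).
Qed.
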